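(* Let $R$ be a semiring, let $\mathcal{I}(R)$ be the set of ideals of $R$, $\mathcal{KI}(R)$ the set of $k$-ideals of $R$, and $\mathcal{KC}(R)$ the set of $k$-congruences on $R$, and let $\kappa:\mathcal{I}(R)\to\{\text{congruences on }R\}$ be $\kappa(A)=\kappa_A$. (1) The restriction of $\kappa$ to $\mathcal{KI}(R)$ is an inclusion-preserving bijection from $\mathcal{KI}(R)$ onto $\mathcal{KC}(R)$. (2) If $\mathcal{F}$ is a family with $\mathcal{KI}(R)\subseteq\mathcal{F}\subseteq\mathcal{I}(R)$ and $\kappa$ is injective on $\mathcal{F}$, then $\mathcal{F}=\mathcal{KI}(R)$.
   Context: A semiring $(R,+,\cdot)$ is a set with two binary operations such that $(R,+)$ is a commutative semigroup, $(R,\cdot)$ is a semigroup, and multiplication distributes over addition from both sides; no additive neutral element or identity is assumed. An ideal of $R$ is a nonempty subset $A\subseteq R$ with $a+b\in A$ and $ra,ar\in A$ for all $a,b\in A$, $r\in R$. For an ideal $A$, its $k$-closure is $\overline{A}=\{x\in R\mid x+a=b \text{ for some } a,b\in A\}$, and $A$ is a $k$-ideal if $A=\overline{A}$. A congruence on $R$ is an equivalence relation $\equiv$ such that $a\equiv b$ implies $a+c\equiv b+c$, $ac\equiv bc$, $ca\equiv cb$ for all $a,b,c\in R$. For an ideal $A$, $\kappa_A$ is the congruence defined by $x\,\kappa_A\,y$ iff $x+a=y+b$ for some $a,b\in A$. A congruence $\theta$ is a $k$-congruence if $\theta=\kappa_A$ for some ideal $A$ of $R$. Congruences are compared as subsets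 of $R\times R$. Throughout, $|R|\geq 2$. *)

(* a semiring in the paper's sense (no 0, no 1 assumed). *)

Record semiring := Semiring {
  carrier :> Type;
  sadd : carrier -> carrier -> carrier;
  smul : carrier -> carrier -> carrier;
  sadd_assoc : forall a b c, sadd a (sadd b c) = sadd (sadd a b) c;
  sadd_comm : forall a b, sadd a b = sadd b a;
  smul_assoc : forall a b c, smul a (smul b c) = smul (smul a b) c;
  smul_addl : forall a b c, smul (sadd a b) c = sadd (smul a c) (smul b c);
  smul_addr : forall a b c, smul a (sadd b c) = sadd (smul a b) (smul a c)
}.

Arguments sadd {s}.
Arguments smul {s}.

Section Defs.
Variable R : semiring.

Definition subset (A B : R -> Prop) : Prop := forall x, A x -> B x.
Definition rel_subset (t u : R -> R -> Prop) : Prop :=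
  forall x y, t x y -> u x y.

Definition is_ideal (A : R -> Prop) : Prop :=
  (exists a, A a) /\
  (forall a b, A a -> A b -> A (sadd a b)) /\
  (forall r a, A a -> A (smul r a) /\ A (smul a r)).

Definition kclosure (A : R -> Prop) : R -> Prop :=
  fun x => exists a b, A a /\ A b /\ sadd x a = b.

Definition is_kideal (A : R -> Prop) : Prop := is_ideal A /\ A = kclosure A.

Definition is_congruence (t : R -> R -> Prop) : Prop :=
  (forall x, t x x) /\ (forall x y, t x y -> t y x) /\
  (forall x y z, t x y -> t y z -> t x z) /\
  (forall a b c, t a b ->
     t (sadd a c) (sadd b c) /\ t (smul a c) (smul b c) /\ t (smul c a) (smul c b)).

Definition kappa (A : R -> Prop) : R -> R -> Prop :=
  fun x y => exists a b, A a /\ A b /\ sadd x a = sadd y b.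

Definition is_kcongruence (t : R -> R -> Prop) : Prop :=
  exists A, is_ideal A /\ t = kappa A.

End Defs.

From Stdlib Require Import FunctionalExtensionality PropExtensionality.

(* The k-closure of an ideal [A] is a k-ideal containing [A] with
   [kappa (kclosure A) = kappa A], so every k-congruence comes from a k-ideal.
   Conversely a k-ideal is recovered from its congruence: if [x] is in [A] and
   [b] is in [B] then [x + b] and [b] are [kappa A]-related, and
   [kappa A <= kappa B] turns this into an equation putting [x] in the
   k-closure of [B].  Hence [kappa] is an order embedding on k-ideals, and on a
   family containing all k-ideals it can only be injective if [A] and its
   k-closure, which have the same congruence, coincide. *)

Section KClosure.
Variable R : semiring.

Definition add_closed (A : R -> Prop) : Prop :=
  forall a b, A a -> A b -> A (sadd a b).

Lemma ideal_add_closed (A : R -> Prop) : is_ideal R A -> add_closed A.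
Proof. intros [_ [Hadd _]]. exact Hadd. Qed.

Lemma saddAC (x y z : R) : sadd (sadd x y) z = sadd (sadd x z) y.
Proof. rewrite <- !sadd_assoc, (sadd_comm _ y z). reflexivity. Qed.

Lemma subset_antisym (A B : R -> Prop) : subset R A B -> subset R B A -> A = B.
Proof.
  intros AB BA. apply functional_extensionality; intro x.
  apply propositional_extensionality; split; auto.
Qed.

Lemma subset_kclosure (A : R -> Prop) : add_closed A -> subset R A (kclosure R A).
Proof. intros Hadd x Ax. exists x, (sadd x x). auto. Qed.

Lemma kclosure_kclosure_sub (A : R -> Prop) :
  add_closed A -> subset R (kclosure R (kclosure R A)) (kclosure R A).
Proof.
  intros Hadd x [a' [b' [[a [c [Ha [Hc Ea']]]] [[b [d [Hb [Hd Eb']]]] E]]]].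
  exists (sadd c b), (sadd d a). repeat split; auto.
  rewrite <- Ea', <- Eb', <- E, !sadd_assoc, saddAC. reflexivity.
Qed.

Lemma kclosure_ideal (A : R -> Prop) : is_ideal R A -> is_ideal R (kclosure R A).
Proof.
  intros HA. pose proof (ideal_add_closed A HA) as Hadd.
  destruct HA as [[a0 Ha0] [_ Hmul]]. split; [|split].
  - exists a0. apply subset_kclosure; auto.
  - intros x y [a [b [Ha [Hb E]]]] [c [d [Hc [Hd F]]]].
    exists (sadd a c), (sadd b d). repeat split; auto.
    rewrite <- E, <- F, !sadd_assoc, (saddAC x a y). reflexivity.
  - intros r x [a [b [Ha [Hb E]]]]. split.
    + exists (smul r a), (smul r b). repeat split; try apply (Hmul r); auto.
      rewrite <- E, smul_addr. reflexivity.
    + exists (smul a r), (smul b r). repeat split; try apply (Hmul r); auto.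
      rewrite <- E, smul_addl. reflexivity.
Qed.

Lemma kclosure_kideal (A : R -> Prop) : is_ideal R A -> is_kideal R (kclosure R A).
Proof.
  intros HA. pose proof (ideal_add_closed A HA) as Hadd.
  split; [apply kclosure_ideal; auto|].
  apply subset_antisym.
  - apply subset_kclosure. apply ideal_add_closed, kclosure_ideal; auto.
  - apply kclosure_kclosure_sub; auto.
Qed.

Lemma kappa_mono (A B : R -> Prop) :
  subset R A B -> rel_subset R (kappa R A) (kappa R B).
Proof. intros AB x y [a [b [Ha [Hb E]]]]. exists a, b. auto. Qed.

Lemma kappa_kclosure (A : R -> Prop) :
  add_closed A -> kappa R (kclosure R A) = kappa R A.
Proof.
  intros Hadd. apply functional_extensionality; intro x.
  apply functional_extensionality; intro y.
  apply propositional_extensionality; split.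
  - intros [a' [b' [[a [c [Ha [Hc Ea']]]] [[b [d [Hb [Hd Eb']]]] E]]]].
    exists (sadd c b), (sadd d a). repeat split; auto.
    rewrite <- Ea', <- Eb', !sadd_assoc, E, saddAC. reflexivity.
  - apply kappa_mono, subset_kclosure; auto.
Qed.

Lemma kappa_sub_kclosure (A B : R -> Prop) :
  add_closed A -> add_closed B -> (exists b, B b) ->
  rel_subset R (kappa R A) (kappa R B) -> subset R A (kclosure R B).
Proof.
  intros HaddA HaddB [b Hb] AB x Ax.
  assert (Hxb : kappa R A (sadd x b) b).
  { exists x, (sadd x x). repeat split; auto.
    rewrite (sadd_comm _ x b), <- sadd_assoc. reflexivity. }
  destruct (AB _ _ Hxb) as [c [d [Hc [Hd E]]]].
  exists (sadd b c), (sadd b d). repeat split; auto.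
  rewrite sadd_assoc. exact E.
Qed.

Lemma kappa_kideal_reflect (A B : R -> Prop) :
  is_kideal R A -> is_kideal R B ->
  rel_subset R (kappa R A) (kappa R B) -> subset R A B.
Proof.
  intros [HA _] [HB EB] AB. rewrite EB.
  apply kappa_sub_kclosure; try apply ideal_add_closed; auto.
  destruct HB as [HBne _]. exact HBne.
Qed.

Lemma kappa_kideal_inj (A B : R -> Prop) :
  is_kideal R A -> is_kideal R B -> kappa R A = kappa R B -> A = B.
Proof.
  intros HA HB E.
  apply subset_antisym; apply kappa_kideal_reflect; auto;
    rewrite E; intros x y; auto.
Qed.

End KClosure.

Theorem theorem3p8 (R : semiring) (hR : exists x y : R, x <> y) :
  (* (1) kappa restricted to k-ideals: maps into KC(R), inclusion-preserving,
     injective, and onto KC(R) *)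
  ((forall A, is_kideal R A -> is_kcongruence R (kappa R A)) /\
   (forall A B, is_kideal R A -> is_kideal R B ->
      subset R A B -> rel_subset R (kappa R A) (kappa R B)) /\
   (forall A B, is_kideal R A -> is_kideal R B -> kappa R A = kappa R B -> A = B) /\
   (forall t, is_kcongruence R t -> exists A, is_kideal R A /\ t = kappa R A))
  /\
  (* (2) maximality of KI(R) among families on which kappa is injective *)
  (forall F : (R -> Prop) -> Prop,
     (forall A, is_kideal R A -> F A) ->
     (forall A, F A -> is_ideal R A) ->
     (forall A B, F A -> F B -> kappa R A = kappa R B -> A = B) ->
     forall A, F A <-> is_kideal R A).
Proof.
  split; [split; [|split; [|split]]|].
  - intros A [HA _]. exists A. auto.
  - intros A B _ _. apply kappa_mono.
  - apply kappa_kideal_inj.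
  - intros t [A [HA ->]]. exists (kclosure R A). split.
    + apply kclosure_kideal; auto.
    + symmetry. apply kappa_kclosure, ideal_add_closed; auto.
  - intros F kideal_in_F F_ideal F_inj A. split; auto.
    intros FA. pose proof (F_ideal A FA) as HA.
    split; auto.
    apply F_inj; auto.
    + apply kideal_in_F, kclosure_kideal; auto.
    + symmetry. apply kappa_kclosure, ideal_add_closed; auto.
Qed.
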